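(* Let $\gamma$, $r$ be as in the context, fix $s_0$, and let $\epsilon>0$ be a sufficiently small number. Let $F:A_{s_0,\epsilon}\to\mathbb{R}$ be a $C^\infty$ function such that for every $s$ with $|s-s_0|<\epsilon$ the restriction of $F$ to the circle $C_s$ coincides with the restriction to $C_s$ of some polynomial $F_s$ in two variables of degree at most $N$. Then $F$ is (the restriction of) a polynomial in $x_1,x_2$ of degree at most $2N$.
   Context: $\gamma$ is a smooth simple closed curve in $\mathbb{R}^2$ parametrized by arc length $s$, $r>0$ is less than half of the maximal radius of a tubular neighbourhood of $\gamma$. For each $s$, $C_s=\{x:|x-\gamma(s)|=r\}$, and $A_{s_0,\epsilon}=\bigcup_{s:|s-s_0|\le\epsilon}C_s$. *)

From Stdlib Require Import Reals List.
From Coquelicot Require Import Coquelicot.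
Open Scope R_scope.

Definition smooth1 (g : R -> R) : Prop := forall (n : nat) (x : R), ex_derive_n g n x.

(** Iterated partial derivatives of f : R -> R -> R along a word w
    (true = d/dx1, false = d/dx2), applied left to right. *)
Fixpoint pderiv (w : list bool) (f : R -> R -> R) : R -> R -> R :=
  match w with
  | nil => f
  | b :: w' =>
      pderiv w' (if b then (fun x y => Derive (fun t => f t y) x)
                      else (fun x y => Derive (fun t => f x t) y))
  end.

Definition smooth2 (f : R -> R -> R) : Prop :=
  forall (w : list bool) (x y : R),
    ex_derive (fun t => pderiv w f t y) x /\
    ex_derive (fun t => pderiv w f x t) y /\
    continuous (fun p : R * R => pderiv w f (fst p) (snd p)) (x, y).

Definition is_poly2 (d : nat) (P : R -> R -> R) : Prop :=
  exists c : nat -> nat -> R, forall x y : R,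
    P x y = sum_f_R0 (fun i => sum_f_R0 (fun j => c i j * x ^ i * y ^ j) (d - i)) d.

Definition arclength_simple_closed_curve (g1 g2 : R -> R) (L : R) : Prop :=
  smooth1 g1 /\ smooth1 g2 /\ 0 < L /\
  (forall s, g1 (s + L) = g1 s /\ g2 (s + L) = g2 s) /\
  (forall s t, 0 <= s < L -> 0 <= t < L -> g1 s = g1 t -> g2 s = g2 t -> s = t) /\
  (forall s, (Derive g1 s) ^ 2 + (Derive g2 s) ^ 2 = 1).

(** The normal map (s,t) |-> gamma(s) + t * nu(s), nu = unit normal
    (-g2', g1'), is injective on [0,L) x (-rho, rho): gamma has a tubular
    neighbourhood of radius rho. *)
Definition tubular_radius (g1 g2 : R -> R) (L rho : R) : Prop :=
  0 < rho /\
  forall s t s' t', 0 <= s < L -> 0 <= s' < L ->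
    Rabs t < rho -> Rabs t' < rho ->
    g1 s - t * Derive g2 s = g1 s' - t' * Derive g2 s' ->
    g2 s + t * Derive g1 s = g2 s' + t' * Derive g1 s' ->
    s = s' /\ t = t'.

Definition on_circle (g1 g2 : R -> R) (r s x1 x2 : R) : Prop :=
  (x1 - g1 s) ^ 2 + (x2 - g2 s) ^ 2 = r ^ 2.

Definition in_A (g1 g2 : R -> R) (r s0 eps x1 x2 : R) : Prop :=
  exists s, Rabs (s - s0) <= eps /\ on_circle g1 g2 r s x1 x2.

From Stdlib Require Import Reals.
From Coquelicot Require Import Coquelicot.
From Stdlib Require Import Lra Lia List FunctionalExtensionality Classical.
Open Scope R_scope.

(* Near s0 any two circles C_a, C_b meet in exactly two points, and C_s passes through
   a given point p only for a nowhere dense set of s: otherwise p would lie at distance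
   r on the normal lines of a whole arc, against the injectivity of the normal map.
   Choose parameters s_0, ..., s_N one at a time, C_(s_k) avoiding the intersection
   points of the earlier circles, and build P = sum_k Q_k q_0 ... q_(k-1),
   where q_j = 0 is the equation of C_(s_j) and deg Q_k <= N - k.  On C_(s_k) the
   difference between F and the previous partial sum is a polynomial of degree N
   vanishing at the 2k points where C_(s_k) meets the earlier circles, hence divisible
   there by q_0 ... q_(k-1).  Counting x^2 + y^2 with weight 1, P has weight N, so on
   every circle it is a polynomial of degree N, and its ordinary degree is at most 2N.
   For any further generic s the same division leaves a remainder of negative degree,
   so F = P on the circles of a dense set of parameters, and everywhere by continuity. *)

Lemma fun2_ext (f g : R -> R -> R) : (forall x y, f x y = g x y) -> f = g.
Proof.
  intros E; apply functional_extensionality; intro x.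
  apply functional_extensionality; intro y; apply E.
Qed.

Inductive poly2 : nat -> (R -> R -> R) -> Prop :=
| poly2_const d c : poly2 d (fun _ _ => c)
| poly2_add d f g : poly2 d f -> poly2 d g -> poly2 d (fun x y => f x y + g x y)
| poly2_mulx d f : poly2 d f -> poly2 (S d) (fun x y => x * f x y)
| poly2_muly d f : poly2 d f -> poly2 (S d) (fun x y => y * f x y)
| poly2_weaken d f : poly2 d f -> poly2 (S d) f.

Lemma poly2_ext d f g : poly2 d f -> (forall x y, f x y = g x y) -> poly2 d g.
Proof. intros H E; rewrite <- (fun2_ext f g E); exact H. Qed.

Lemma poly2_le d d' f : (d <= d')%nat -> poly2 d f -> poly2 d' f.
Proof. induction 1; auto using poly2_weaken. Qed.

Lemma poly2_0_const f : poly2 0 f -> forall x y, f x y = f 0 0.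
Proof.
  intros H; remember 0%nat as d; induction H; intros; try discriminate; auto.
  rewrite IHpoly2_1, IHpoly2_2; auto.
Qed.

Lemma poly2_scal d c f : poly2 d f -> poly2 d (fun x y => c * f x y).
Proof.
  induction 1.
  - apply poly2_const.
  - eapply poly2_ext; [apply (poly2_add _ _ _ IHpoly2_1 IHpoly2_2)|]; intros; simpl; ring.
  - eapply poly2_ext; [apply (poly2_mulx _ _ IHpoly2)|]; intros; simpl; ring.
  - eapply poly2_ext; [apply (poly2_muly _ _ IHpoly2)|]; intros; simpl; ring.
  - apply poly2_weaken; auto.
Qed.

Lemma poly2_sub d f g : poly2 d f -> poly2 d g -> poly2 d (fun x y => f x y - g x y).
Proof.
  intros Hf Hg; eapply poly2_ext.
  - apply (poly2_add _ _ _ Hf (poly2_scal _ (-1) _ Hg)).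
  - intros; simpl; ring.
Qed.

Lemma poly2_mul d1 d2 f g :
  poly2 d1 f -> poly2 d2 g -> poly2 (d1 + d2) (fun x y => f x y * g x y).
Proof.
  intros Hf Hg; induction Hf.
  - eapply poly2_le; [|apply poly2_scal; eauto]; lia.
  - eapply poly2_ext; [apply (poly2_add _ _ _ IHHf1 IHHf2)|]; intros; simpl; ring.
  - eapply poly2_ext; [apply (poly2_mulx _ _ IHHf)|]; intros; simpl; ring.
  - eapply poly2_ext; [apply (poly2_muly _ _ IHHf)|]; intros; simpl; ring.
  - apply poly2_weaken; auto.
Qed.

Lemma poly2_affine a b c : poly2 1 (fun x y => a * x + b * y + c).
Proof.
  apply poly2_add; [apply poly2_add|apply poly2_weaken, poly2_const].
  - eapply poly2_ext; [apply poly2_mulx, (poly2_const 0 a)|]; intros; simpl; ring.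
  - eapply poly2_ext; [apply poly2_muly, (poly2_const 0 b)|]; intros; simpl; ring.
Qed.

Lemma poly2_comp_affine d f u v : poly2 d f -> poly2 1 u -> poly2 1 v ->
  poly2 d (fun x y => f (u x y) (v x y)).
Proof.
  intros Hf Hu Hv; induction Hf.
  - apply poly2_const.
  - apply poly2_add; auto.
  - apply (poly2_mul 1 d); auto.
  - apply (poly2_mul 1 d); auto.
  - apply poly2_weaken; auto.
Qed.

Lemma poly2_continuous d f : poly2 d f -> forall (u v : R -> R) (t : R),
  continuous u t -> continuous v t -> continuous (fun t => f (u t) (v t)) t.
Proof.
  induction 1; intros u v t Hu Hv.
  - apply continuous_const.
  - apply (continuous_plus (fun t => f (u t) (v t)) (fun t => g (u t) (v t))); auto.
  - apply (continuous_mult u (fun t => f (u t) (v t))); auto.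
  - apply (continuous_mult v (fun t => f (u t) (v t))); auto.
  - auto.
Qed.

Inductive mono_span (d : nat) : (R -> R -> R) -> Prop :=
| mono_span_zero : mono_span d (fun _ _ => 0)
| mono_span_mono k i j : (i + j <= d)%nat -> mono_span d (fun x y => k * x ^ i * y ^ j)
| mono_span_add f g : mono_span d f -> mono_span d g -> mono_span d (fun x y => f x y + g x y).

Lemma mono_span_ext d f g : mono_span d f -> (forall x y, f x y = g x y) -> mono_span d g.
Proof. intros H E; rewrite <- (fun2_ext f g E); exact H. Qed.

Lemma mono_span_le d d' f : (d <= d')%nat -> mono_span d f -> mono_span d' f.
Proof.
  intros Hd; induction 1; [apply mono_span_zero|apply mono_span_mono; lia|].
  apply mono_span_add; auto.
Qed.

Lemma mono_span_mulx d f : mono_span d f -> mono_span (S d) (fun x y => x * f x y).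
Proof.
  induction 1.
  - eapply mono_span_ext; [apply mono_span_zero|]; intros; simpl; ring.
  - eapply mono_span_ext; [apply (mono_span_mono _ k (S i) j); lia|]; intros; simpl; ring.
  - eapply mono_span_ext; [apply (mono_span_add _ _ _ IHmono_span1 IHmono_span2)|].
    intros; simpl; ring.
Qed.

Lemma mono_span_muly d f : mono_span d f -> mono_span (S d) (fun x y => y * f x y).
Proof.
  induction 1.
  - eapply mono_span_ext; [apply mono_span_zero|]; intros; simpl; ring.
  - eapply mono_span_ext; [apply (mono_span_mono _ k i (S j)); lia|]; intros; simpl; ring.
  - eapply mono_span_ext; [apply (mono_span_add _ _ _ IHmono_span1 IHmono_span2)|].
    intros; simpl; ring.
Qed.

Lemma mono_span_of_poly2 d f : poly2 d f -> mono_span d f.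
Proof.
  induction 1.
  - eapply mono_span_ext; [apply (mono_span_mono _ c 0 0); lia|]; intros; simpl; ring.
  - apply mono_span_add; auto.
  - apply mono_span_mulx; auto.
  - apply mono_span_muly; auto.
  - apply (mono_span_le d); auto.
Qed.

Lemma sum_f_R0_kronecker k n v :
  sum_f_R0 (fun i => if Nat.eqb i k then v else 0) n = if Nat.leb k n then v else 0.
Proof.
  induction n as [|n IH]; cbn [sum_f_R0].
  - destruct k; reflexivity.
  - rewrite IH. destruct (Nat.eqb_spec (S n) k), (Nat.leb_spec k n), (Nat.leb_spec k (S n));
      try lia; ring.
Qed.

Lemma is_poly2_monomial d k i j : (i + j <= d)%nat ->
  is_poly2 d (fun x y => k * x ^ i * y ^ j).
Proof.
  intros Hij.
  exists (fun i' j' => if Nat.eqb i' i then if Nat.eqb j' j then k else 0 else 0).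
  intros x y.
  transitivity (sum_f_R0 (fun i' => if Nat.eqb i' i then k * x ^ i * y ^ j else 0) d).
  { rewrite sum_f_R0_kronecker. destruct (Nat.leb_spec i d); [reflexivity|lia]. }
  apply sum_eq; intros i' _. destruct (Nat.eqb_spec i' i) as [->|]; cycle 1.
  { symmetry; apply sum_eq_R0; intros; ring. }
  transitivity (sum_f_R0 (fun j' => if Nat.eqb j' j then k * x ^ i * y ^ j else 0) (d - i)).
  { rewrite sum_f_R0_kronecker. destruct (Nat.leb_spec j (d - i)); [reflexivity|lia]. }
  apply sum_eq; intros j' _. destruct (Nat.eqb_spec j' j) as [->|]; ring.
Qed.

Lemma is_poly2_add d f g :
  is_poly2 d f -> is_poly2 d g -> is_poly2 d (fun x y => f x y + g x y).
Proof.
  intros [c Hc] [c' Hc']. exists (fun i j => c i j + c' i j). intros x y.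
  rewrite Hc, Hc', <- sum_plus. apply sum_eq; intros i _. rewrite <- sum_plus.
  apply sum_eq; intros; ring.
Qed.

Lemma is_poly2_of_mono_span d f : mono_span d f -> is_poly2 d f.
Proof.
  induction 1.
  - exists (fun _ _ => 0); intros. symmetry; apply sum_eq_R0; intros.
    apply sum_eq_R0; intros; ring.
  - apply is_poly2_monomial; auto.
  - apply is_poly2_add; auto.
Qed.

Lemma is_poly2_of_poly2 d f : poly2 d f -> is_poly2 d f.
Proof. intros H; apply is_poly2_of_mono_span, mono_span_of_poly2, H. Qed.

Lemma poly2_of_is_poly2 d f : is_poly2 d f -> poly2 d f.
Proof.
  intros [c Hc]. eapply poly2_ext; [|intros; symmetry; apply Hc].
  assert (Hsum : forall n (F : nat -> R -> R -> R), (forall i, (i <= n)%nat -> poly2 d (F i)) ->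
    poly2 d (fun x y => sum_f_R0 (fun i => F i x y) n)).
  { induction n; intros F HF; cbn [sum_f_R0]; [apply HF; lia|].
    apply poly2_add; [apply IHn; intros|]; apply HF; lia. }
  assert (Hpow : forall n, poly2 n (fun x y => x ^ n) /\ poly2 n (fun x y => y ^ n)).
  { induction n as [|n [IHx IHy]]; simpl; [split; apply poly2_const|].
    split; [apply poly2_mulx|apply poly2_muly]; auto. }
  apply Hsum; intros i Hi; apply Hsum; intros j Hj.
  apply (poly2_le (0 + i + j)); [lia|].
  apply poly2_mul; [apply poly2_mul; [apply poly2_const|]|]; apply Hpow.
Qed.

Inductive poly1 : nat -> (R -> R) -> Prop :=
| poly1_const d c : poly1 d (fun _ => c)
| poly1_add d f g : poly1 d f -> poly1 d g -> poly1 d (fun x => f x + g x)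
| poly1_mulx d f : poly1 d f -> poly1 (S d) (fun x => x * f x)
| poly1_weaken d f : poly1 d f -> poly1 (S d) f.

Lemma poly1_ext d f g : poly1 d f -> (forall x, f x = g x) -> poly1 d g.
Proof. intros H E; rewrite <- (functional_extensionality f g E); exact H. Qed.

Lemma poly1_le d d' f : (d <= d')%nat -> poly1 d f -> poly1 d' f.
Proof. induction 1; auto using poly1_weaken. Qed.

Lemma poly1_scal d c f : poly1 d f -> poly1 d (fun x => c * f x).
Proof.
  induction 1.
  - apply poly1_const.
  - eapply poly1_ext; [apply (poly1_add _ _ _ IHpoly1_1 IHpoly1_2)|]; intros; simpl; ring.
  - eapply poly1_ext; [apply (poly1_mulx _ _ IHpoly1)|]; intros; simpl; ring.
  - apply poly1_weaken; auto.
Qed.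

Lemma poly2_of_poly1 d f : poly1 d f -> poly2 d (fun x _ => f x).
Proof.
  induction 1; [apply poly2_const|apply poly2_add|apply poly2_mulx|apply poly2_weaken]; auto.
Qed.

Lemma poly1_factor m A a : poly1 m A -> exists A1, poly1 (pred m) A1 /\
  (m = 0%nat -> forall x, A1 x = 0) /\ forall x, A x = (x - a) * A1 x + A a.
Proof.
  induction 1 as [d c|d f g _ [F1 [HF1 [ZF EF]]] _ [G1 [HG1 [ZG EG]]]
                 |d f H [F1 [HF1 [_ EF]]]|d f _ [F1 [HF1 [_ EF]]]].
  - exists (fun _ => 0); repeat split; [apply poly1_const|intros; ring].
  - exists (fun x => F1 x + G1 x); repeat split.
    + apply poly1_add; auto.
    + intros Hd x; rewrite ZF, ZG; auto; ring.
    + intros x; rewrite (EF x), (EG x); ring.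
  - exists (fun x => f x + a * F1 x); repeat split; [|discriminate|intros x; rewrite (EF x); ring].
    apply poly1_add; simpl; [exact H|apply poly1_scal, (poly1_le (pred d)); auto; lia].
  - exists F1; repeat split; [apply (poly1_le (pred d)); auto; lia|discriminate|auto].
Qed.

Lemma poly2_reduce_unit_circle m D : poly2 m D -> exists A B,
  poly1 m A /\ poly1 (pred m) B /\ (m = 0%nat -> forall x, B x = 0) /\
  forall x y, x ^ 2 + y ^ 2 = 1 -> D x y = A x + y * B x.
Proof.
  induction 1 as [d c|d f g _ [A1 [B1 [HA1 [HB1 [Z1 E1]]]]] _ [A2 [B2 [HA2 [HB2 [Z2 E2]]]]]
                 |d f _ [A [B [HA [HB [Z E]]]]]|d f _ [A [B [HA [HB [Z E]]]]]
                 |d f _ [A [B [HA [HB [Z E]]]]]].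
  - exists (fun _ => c), (fun _ => 0); repeat split; try apply poly1_const; intros; ring.
  - exists (fun x => A1 x + A2 x), (fun x => B1 x + B2 x); repeat split.
    + apply poly1_add; auto.
    + apply poly1_add; auto.
    + intros Hd x; rewrite Z1, Z2; auto; ring.
    + intros x y Hxy; rewrite E1, E2; auto; ring.
  - exists (fun x => x * A x), (fun x => x * B x); repeat split.
    + apply poly1_mulx; auto.
    + destruct d as [|d]; [|apply poly1_mulx; auto].
      eapply poly1_ext; [apply (poly1_const 0 0)|]; intros; rewrite Z; auto; ring.
    + discriminate.
    + intros x y Hxy; rewrite E; auto; ring.
  - (* y * (A x + y B x) = B x (1 - x^2) + y A x on the unit circle *)
    exists (fun x => B x - x * (x * B x)), A; repeat split; auto; [|discriminate|].
    + destruct d as [|d].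
      * eapply poly1_ext; [apply (poly1_const 1 0)|]; intros; simpl; rewrite Z; auto; ring.
      * eapply poly1_ext.
        -- apply poly1_add; [apply (poly1_le d); [lia|exact HB]|].
           apply (poly1_scal _ (-1)), poly1_mulx, poly1_mulx; exact HB.
        -- intros; simpl; ring.
    + intros x y Hxy; rewrite E; auto.
      replace (y * (A x + y * B x)) with (y * A x + y ^ 2 * B x) by ring.
      replace (y ^ 2) with (1 - x ^ 2) by lra. ring.
  - exists A, B; repeat split; auto; [apply poly1_weaken; auto| |discriminate].
    destruct d as [|d]; [|apply (poly1_le d); [simpl; lia|exact HB]].
    eapply poly1_ext; [apply (poly1_const 0 0)|]; intros; simpl; rewrite Z; auto.
Qed.

Lemma poly2_div_unit_circle m G a h : poly2 m G -> 0 < h -> a ^ 2 + h ^ 2 = 1 ->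
  G a h = 0 -> G a (- h) = 0 ->
  exists G1, poly2 (pred m) G1 /\ forall U V, U ^ 2 + V ^ 2 = 1 -> G U V = (U - a) * G1 U V.
Proof.
  intros HG Hh Hah Gp Gm.
  destruct (poly2_reduce_unit_circle _ _ HG) as [A [B [HA [HB [_ E]]]]].
  assert (Ep : A a + h * B a = 0) by (rewrite <- E; auto).
  assert (Em : A a + - h * B a = 0) by (rewrite <- E; auto; nra).
  assert (Aa : A a = 0) by nra.
  assert (Ba : B a = 0) by nra.
  destruct (poly1_factor _ _ a HA) as [A1 [HA1 [_ EA]]].
  destruct (poly1_factor _ _ a HB) as [B1 [HB1 [ZB EB]]].
  exists (fun U V => A1 U + V * B1 U); split.
  - apply poly2_add; [apply poly2_of_poly1; auto|].
    destruct (pred m) as [|k].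
    + eapply poly2_ext; [apply (poly2_const 0 0)|]; intros; rewrite ZB; auto; ring.
    + apply poly2_muly, poly2_of_poly1; auto.
  - intros U V HUV; rewrite E, EA, EB, Aa, Ba; auto; ring.
Qed.

Inductive wpoly : nat -> (R -> R -> R) -> Prop :=
| wpoly_const d c : wpoly d (fun _ _ => c)
| wpoly_add d f g : wpoly d f -> wpoly d g -> wpoly d (fun x y => f x y + g x y)
| wpoly_mulx d f : wpoly d f -> wpoly (S d) (fun x y => x * f x y)
| wpoly_muly d f : wpoly d f -> wpoly (S d) (fun x y => y * f x y)
| wpoly_mulnorm d f : wpoly d f -> wpoly (S d) (fun x y => (x ^ 2 + y ^ 2) * f x y)
| wpoly_weaken d f : wpoly d f -> wpoly (S d) f.

Lemma wpoly_ext d f g : wpoly d f -> (forall x y, f x y = g x y) -> wpoly d g.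
Proof. intros H E; rewrite <- (fun2_ext f g E); exact H. Qed.

Lemma wpoly_le d d' f : (d <= d')%nat -> wpoly d f -> wpoly d' f.
Proof. induction 1; auto using wpoly_weaken. Qed.

Lemma wpoly_of_poly2 d f : poly2 d f -> wpoly d f.
Proof.
  induction 1;
    [apply wpoly_const|apply wpoly_add|apply wpoly_mulx|apply wpoly_muly|apply wpoly_weaken];
    auto.
Qed.

Lemma wpoly_scal d c f : wpoly d f -> wpoly d (fun x y => c * f x y).
Proof.
  induction 1.
  - apply wpoly_const.
  - eapply wpoly_ext; [apply (wpoly_add _ _ _ IHwpoly1 IHwpoly2)|]; intros; simpl; ring.
  - eapply wpoly_ext; [apply (wpoly_mulx _ _ IHwpoly)|]; intros; simpl; ring.
  - eapply wpoly_ext; [apply (wpoly_muly _ _ IHwpoly)|]; intros; simpl; ring.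
  - eapply wpoly_ext; [apply (wpoly_mulnorm _ _ IHwpoly)|]; intros; simpl; ring.
  - apply wpoly_weaken; auto.
Qed.

Lemma wpoly_mul d1 d2 f g :
  wpoly d1 f -> wpoly d2 g -> wpoly (d1 + d2) (fun x y => f x y * g x y).
Proof.
  intros Hf Hg; induction Hf.
  - eapply wpoly_le; [|apply wpoly_scal; eauto]; lia.
  - eapply wpoly_ext; [apply (wpoly_add _ _ _ IHHf1 IHHf2)|]; intros; simpl; ring.
  - eapply wpoly_ext; [apply (wpoly_mulx _ _ IHHf)|]; intros; simpl; ring.
  - eapply wpoly_ext; [apply (wpoly_muly _ _ IHHf)|]; intros; simpl; ring.
  - eapply wpoly_ext; [apply (wpoly_mulnorm _ _ IHHf)|]; intros; simpl; ring.
  - apply wpoly_weaken; auto.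
Qed.

Lemma poly2_of_wpoly d f : wpoly d f -> poly2 (2 * d) f.
Proof.
  induction 1.
  - apply poly2_const.
  - apply poly2_add; auto.
  - eapply poly2_le; [|apply (poly2_mulx _ _ IHwpoly)]; lia.
  - eapply poly2_le; [|apply (poly2_muly _ _ IHwpoly)]; lia.
  - replace (2 * S d)%nat with (2 + 2 * d)%nat by lia. apply poly2_mul; auto.
    eapply poly2_ext.
    + apply poly2_add; [apply poly2_mulx, poly2_mulx|apply poly2_muly, poly2_muly];
        apply (poly2_const 0 1).
    + intros; simpl; ring.
  - eapply poly2_le; [|eauto]; lia.
Qed.

Lemma wpoly_on_circle d f c1 c2 r : wpoly d f -> exists g, poly2 d g /\
  forall x y, (x - c1) ^ 2 + (y - c2) ^ 2 = r ^ 2 -> f x y = g x y.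
Proof.
  induction 1 as [d c|d f g _ [f' [Hf Ef]] _ [g' [Hg Eg]]|d f _ [f' [Hf Ef]]
                 |d f _ [f' [Hf Ef]]|d f _ [f' [Hf Ef]]|d f _ [f' [Hf Ef]]].
  - exists (fun _ _ => c); split; [apply poly2_const|auto].
  - exists (fun x y => f' x y + g' x y); split; [apply poly2_add; auto|].
    intros; rewrite Ef, Eg; auto.
  - exists (fun x y => x * f' x y); split; [apply poly2_mulx; auto|].
    intros; rewrite Ef; auto.
  - exists (fun x y => y * f' x y); split; [apply poly2_muly; auto|].
    intros; rewrite Ef; auto.
  - (* on the circle, x^2 + y^2 is the affine function 2 c.(x, y) + r^2 - |c|^2 *)
    exists (fun x y => (2 * c1 * x + 2 * c2 * y + (r ^ 2 - c1 ^ 2 - c2 ^ 2)) * f' x y).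
    split; [apply (poly2_mul 1 d); [apply poly2_affine|auto]|].
    intros x y Hxy; rewrite Ef; auto. f_equal; nra.
  - exists f'; split; [apply poly2_weaken|]; auto.
Qed.

Definition circ (b1 b2 r x y : R) : R := (x - b1) ^ 2 + (y - b2) ^ 2 - r ^ 2.

Lemma wpoly_circ b1 b2 r : wpoly 1 (circ b1 b2 r).
Proof.
  eapply wpoly_ext.
  - apply wpoly_add; [apply (wpoly_mulnorm 0 (fun _ _ => 1)), wpoly_const|].
    apply wpoly_of_poly2, (poly2_affine (-2 * b1) (-2 * b2) (b1 ^ 2 + b2 ^ 2 - r ^ 2)).
  - intros; unfold circ; ring.
Qed.

Section TwoCircles.

Variables c1 c2 b1 b2 r : R.
Hypothesis r_pos : 0 < r.
Hypothesis centres_dist : 0 < (c1 - b1) ^ 2 + (c2 - b2) ^ 2 < 4 * r ^ 2.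

(* Coordinates (U, V) in which circle c is the unit circle and the radical axis
   of the two circles is the line U = a. *)
Let dist := sqrt ((c1 - b1) ^ 2 + (c2 - b2) ^ 2).
Let e1 := (c1 - b1) / dist.
Let e2 := (c2 - b2) / dist.
Let a := - dist / (2 * r).
Let h := sqrt (1 - a ^ 2).
Let U x y := (e1 * (x - c1) + e2 * (y - c2)) / r.
Let V x y := (- e2 * (x - c1) + e1 * (y - c2)) / r.
Let X u v := c1 + r * (e1 * u - e2 * v).
Let Y u v := c2 + r * (e2 * u + e1 * v).

Lemma dist_pos : 0 < dist.
Proof. apply sqrt_lt_R0; lra. Qed.

Lemma e_unit : e1 ^ 2 + e2 ^ 2 = 1.
Proof.
  pose proof dist_pos. unfold e1, e2.
  replace (((c1 - b1) / dist) ^ 2 + ((c2 - b2) / dist) ^ 2)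
    with (((c1 - b1) ^ 2 + (c2 - b2) ^ 2) / (dist * dist)) by (field; lra).
  unfold dist; rewrite sqrt_sqrt; [field|]; lra.
Qed.

Lemma a_sq_lt_1 : a ^ 2 < 1.
Proof.
  pose proof dist_pos.
  assert (Hd : dist * dist < 4 * r ^ 2) by (unfold dist; rewrite sqrt_sqrt; lra).
  unfold a. replace ((- dist / (2 * r)) ^ 2) with (dist * dist / (4 * r ^ 2)) by (field; lra).
  apply Rlt_div_l; nra.
Qed.

Lemma h_pos : 0 < h.
Proof. apply sqrt_lt_R0; pose proof a_sq_lt_1; lra. Qed.

Lemma a_h_unit : a ^ 2 + h ^ 2 = 1.
Proof. unfold h; rewrite pow2_sqrt; [ring|pose proof a_sq_lt_1; lra]. Qed.

Lemma XY_UV x y : X (U x y) (V x y) = x /\ Y (U x y) (V x y) = y.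
Proof.
  pose proof e_unit. unfold X, Y, U, V; split.
  - transitivity (c1 + (e1 ^ 2 + e2 ^ 2) * (x - c1)); [field; lra|rewrite H; ring].
  - transitivity (c2 + (e1 ^ 2 + e2 ^ 2) * (y - c2)); [field; lra|rewrite H; ring].
Qed.

Lemma circ_c_XY u v : circ c1 c2 r (X u v) (Y u v) = r ^ 2 * (u ^ 2 + v ^ 2 - 1).
Proof.
  pose proof e_unit. unfold circ, X, Y.
  transitivity (r ^ 2 * (e1 ^ 2 + e2 ^ 2) * (u ^ 2 + v ^ 2) - r ^ 2); [ring|rewrite H; ring].
Qed.

Lemma circ_b_XY u v :
  circ b1 b2 r (X u v) (Y u v) = r ^ 2 * (u ^ 2 + v ^ 2 - 1) + 2 * r * dist * (u - a).
Proof.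
  pose proof e_unit. pose proof dist_pos.
  assert (E1 : c1 - b1 = dist * e1) by (unfold e1; field; lra).
  assert (E2 : c2 - b2 = dist * e2) by (unfold e2; field; lra).
  unfold circ, X, Y, a.
  replace (c1 + r * (e1 * u - e2 * v) - b1) with (dist * e1 + r * (e1 * u - e2 * v)) by lra.
  replace (c2 + r * (e2 * u + e1 * v) - b2) with (dist * e2 + r * (e2 * u + e1 * v)) by lra.
  transitivity ((e1 ^ 2 + e2 ^ 2) * (dist ^ 2 + 2 * dist * r * u + r ^ 2 * (u ^ 2 + v ^ 2))
                - r ^ 2); [ring|rewrite H; field; lra].
Qed.

Lemma unit_circle_UV x y : circ c1 c2 r x y = 0 -> U x y ^ 2 + V x y ^ 2 = 1.
Proof.
  intros Hc. destruct (XY_UV x y) as [Ex Ey].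
  pose proof (circ_c_XY (U x y) (V x y)) as E. rewrite Ex, Ey, Hc in E.
  symmetry in E; apply Rmult_integral in E as [E|E]; [pose proof (pow_lt r 2 r_pos); lra|lra].
Qed.

Lemma circ_b_on_circ_c x y :
  circ c1 c2 r x y = 0 -> circ b1 b2 r x y = 2 * r * dist * (U x y - a).
Proof.
  intros Hc. destruct (XY_UV x y) as [Ex Ey].
  pose proof (circ_b_XY (U x y) (V x y)) as E. rewrite Ex, Ey, (unit_circle_UV x y Hc) in E.
  rewrite E; ring.
Qed.

Lemma circles_meet : exists x y, circ c1 c2 r x y = 0 /\ circ b1 b2 r x y = 0.
Proof.
  exists (X a h), (Y a h). rewrite circ_c_XY, circ_b_XY, a_h_unit. split; ring.
Qed.

Lemma circles_meet_in_two_points : exists p1 p2 q1 q2, forall x y,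
  circ c1 c2 r x y = 0 -> circ b1 b2 r x y = 0 ->
  (x = p1 /\ y = p2) \/ (x = q1 /\ y = q2).
Proof.
  exists (X a h), (Y a h), (X a (- h)), (Y a (- h)). intros x y Hc Hb.
  pose proof dist_pos. pose proof h_pos. pose proof a_h_unit.
  rewrite (circ_b_on_circ_c x y Hc) in Hb.
  assert (Ua : U x y = a).
  { apply Rmult_integral in Hb as [Hb|Hb]; [nra|lra]. }
  assert (Vh : (V x y - h) * (V x y + h) = 0).
  { pose proof (unit_circle_UV x y Hc). rewrite Ua in H2. nra. }
  destruct (XY_UV x y) as [Ex Ey]. rewrite <- Ua.
  apply Rmult_integral in Vh as [Vh|Vh]; [left|right];
    [replace h with (V x y) by lra|replace (- h) with (V x y) by lra]; auto.
Qed.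

Lemma poly2_div_circ m g : poly2 m g ->
  (forall x y, circ c1 c2 r x y = 0 -> circ b1 b2 r x y = 0 -> g x y = 0) ->
  exists g1, poly2 (pred m) g1 /\
    forall x y, circ c1 c2 r x y = 0 -> g x y = circ b1 b2 r x y * g1 x y.
Proof.
  intros Hg Hz. pose proof dist_pos.
  set (G u v := g (X u v) (Y u v)).
  assert (HG : poly2 m G).
  { apply (poly2_comp_affine m g X Y Hg); unfold X, Y.
    - eapply poly2_ext; [apply (poly2_affine (r * e1) (- (r * e2)) c1)|]; intros; simpl; ring.
    - eapply poly2_ext; [apply (poly2_affine (r * e2) (r * e1) c2)|]; intros; simpl; ring. }
  assert (Gz : forall v, v ^ 2 = h ^ 2 -> G a v = 0).
  { intros v Hv. apply Hz; [rewrite circ_c_XY|rewrite circ_b_XY];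
      replace (a ^ 2 + v ^ 2) with 1 by (pose proof a_h_unit; lra); ring. }
  destruct (poly2_div_unit_circle m G a h HG h_pos a_h_unit) as [G1 [HG1 EG]];
    [apply Gz; ring..|].
  exists (fun x y => / (2 * r * dist) * G1 (U x y) (V x y)); split.
  - apply poly2_scal, (poly2_comp_affine _ G1 U V HG1); unfold U, V.
    + eapply poly2_ext; [apply (poly2_affine (e1 / r) (e2 / r) (- (e1 * c1 + e2 * c2) / r))|].
      intros; simpl; field; lra.
    + eapply poly2_ext;
        [apply (poly2_affine (- e2 / r) (e1 / r) (- (- e2 * c1 + e1 * c2) / r))|].
      intros; simpl; field; lra.
  - intros x y Hc. destruct (XY_UV x y) as [Ex Ey].
    replace (g x y) with (G (U x y) (V x y)) by (unfold G; rewrite Ex, Ey; reflexivity).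
    rewrite EG, circ_b_on_circ_c by (auto using unit_circle_UV). field; lra.
Qed.

End TwoCircles.

Definition circ_prod (g1 g2 : R -> R) (r : R) (l : list R) (x y : R) : R :=
  fold_right (fun s acc => circ (g1 s) (g2 s) r x y * acc) 1 l.

Lemma wpoly_circ_prod g1 g2 r l : wpoly (length l) (circ_prod g1 g2 r l).
Proof.
  induction l as [|s l IH]; [apply (wpoly_const 0 1)|].
  exact (wpoly_mul 1 _ _ _ (wpoly_circ (g1 s) (g2 s) r) IH).
Qed.

Lemma circ_prod_zero g1 g2 r l s x y :
  In s l -> circ (g1 s) (g2 s) r x y = 0 -> circ_prod g1 g2 r l x y = 0.
Proof.
  induction l as [|s' l IH]; simpl; intros Hin Hc; [contradiction|].
  destruct Hin as [<-|Hs]; [rewrite Hc|rewrite IH]; auto; ring.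
Qed.

Lemma poly2_div_circ_prod g1 g2 r c1 c2 : 0 < r -> forall l m D,
  NoDup l ->
  (forall s, In s l -> 0 < (c1 - g1 s) ^ 2 + (c2 - g2 s) ^ 2 < 4 * r ^ 2) ->
  (forall s s', In s l -> In s' l -> s <> s' -> forall x y, circ c1 c2 r x y = 0 ->
     circ (g1 s) (g2 s) r x y = 0 -> circ (g1 s') (g2 s') r x y <> 0) ->
  poly2 m D ->
  (forall s x y, In s l -> circ c1 c2 r x y = 0 -> circ (g1 s) (g2 s) r x y = 0 ->
     D x y = 0) ->
  exists D1, poly2 (m - length l) D1 /\
    (forall x y, circ c1 c2 r x y = 0 -> D x y = D1 x y * circ_prod g1 g2 r l x y) /\
    ((m < length l)%nat -> forall x y, circ c1 c2 r x y = 0 -> D x y = 0).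
Proof.
  intros Hr l; induction l as [|s l IH]; intros m D Hnd Hclose Hsimple HD Hz.
  { exists D; repeat split; [rewrite Nat.sub_0_r; auto|intros; simpl; ring|simpl; lia]. }
  inversion Hnd as [|? ? Hs Hnd']; subst.
  assert (Hs_in : In s (s :: l)) by (left; reflexivity).
  destruct (poly2_div_circ c1 c2 (g1 s) (g2 s) r Hr (Hclose s Hs_in) m D HD)
    as [D1 [HD1 ED]]; [intros; apply (Hz s); auto|].
  destruct (IH (pred m) D1 Hnd') as [D2 [HD2 [ED1 ZD1]]].
  - intros; apply Hclose; right; auto.
  - intros a b Ha Hb; exact (Hsimple a b (or_intror Ha) (or_intror Hb)).
  - exact HD1.
  -     intros s' x y Hs' Hc Hc'.
    assert (Hcs : circ (g1 s) (g2 s) r x y <> 0).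
    { intro Hcs. apply (Hsimple s' s (or_intror Hs') Hs_in) with x y; auto.
      intros ->; contradiction. }
    assert (HD0 : D x y = 0) by (apply (Hz s'); auto; right; auto).
    rewrite ED in HD0 by auto. apply Rmult_integral in HD0 as [|]; tauto.
  - exists D2; repeat split.
    + replace (m - length (s :: l))%nat with (pred m - length l)%nat by (simpl; lia); auto.
    + intros x y Hc. rewrite ED, ED1 by auto. simpl; ring.
    + simpl; intros Hm x y Hc. destruct m as [|m].
      * (* in degree 0, D is a constant and vanishes where the circles meet *)
        destruct (circles_meet c1 c2 (g1 s) (g2 s) r Hr (Hclose s Hs_in)) as [p [q [Hp Hq]]].
        rewrite (poly2_0_const D HD), <- (poly2_0_const D HD p q).
        apply (Hz s); auto.
      * rewrite ED, ZD1 by (simpl; auto; lia). ring.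
Qed.

Definition nowhere_dense (B : R -> Prop) : Prop :=
  forall u v, u < v -> exists s, u < s < v /\
    exists d, 0 < d /\ forall t, Rabs (t - s) < d -> ~ B t.

Lemma nowhere_dense_subset (B B' : R -> Prop) :
  (forall s, B s -> B' s) -> nowhere_dense B' -> nowhere_dense B.
Proof.
  intros H T u v Huv. destruct (T u v Huv) as [s [Hs [d [Hd Hn]]]].
  exists s; split; auto. exists d; split; auto. intros t Ht HB. apply (Hn t Ht); auto.
Qed.

Lemma nowhere_dense_empty : nowhere_dense (fun _ => False).
Proof. intros u v Huv. exists ((u + v) / 2); split; [lra|]. exists 1; split; [lra|auto]. Qed.

Lemma nowhere_dense_union B1 B2 :
  nowhere_dense B1 -> nowhere_dense B2 -> nowhere_dense (fun s => B1 s \/ B2 s).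
Proof.
  intros T1 T2 u v Huv. destruct (T1 u v Huv) as [s1 [Hs1 [d1 [Hd1 Hn1]]]].
  set (u' := Rmax u (s1 - d1)). set (v' := Rmin v (s1 + d1)).
  assert (Hu' : u <= u' /\ s1 - d1 <= u') by (split; [apply Rmax_l|apply Rmax_r]).
  assert (Hv' : v' <= v /\ v' <= s1 + d1) by (split; [apply Rmin_l|apply Rmin_r]).
  assert (Hu'v' : u' < v') by (apply Rmax_lub_lt; apply Rmin_glb_lt; lra).
  destruct (T2 u' v' Hu'v') as [s2 [Hs2 [d2 [Hd2 Hn2]]]].
  exists s2; split; [lra|].
  exists (Rmin d2 (Rmin (s2 - u') (v' - s2))); split.
  { apply Rmin_glb_lt; [|apply Rmin_glb_lt]; lra. }
  intros t Ht. pose proof (Rmin_l d2 (Rmin (s2 - u') (v' - s2))).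
  pose proof (Rmin_r d2 (Rmin (s2 - u') (v' - s2))).
  pose proof (Rmin_l (s2 - u') (v' - s2)). pose proof (Rmin_r (s2 - u') (v' - s2)).
  apply Rabs_def2 in Ht. intros [HB|HB].
  - apply (Hn1 t); auto. apply Rabs_def1; lra.
  - apply (Hn2 t); auto. apply Rabs_def1; lra.
Qed.

Lemma nowhere_dense_exists_in {A : Type} (l : list A) (P : A -> R -> Prop) :
  (forall a, In a l -> nowhere_dense (P a)) ->
  nowhere_dense (fun s => exists a, In a l /\ P a s).
Proof.
  induction l as [|a l IH]; intros H.
  - apply nowhere_dense_subset with (fun _ => False); [intros s [b [[] _]]|].
    apply nowhere_dense_empty.
  - apply nowhere_dense_subset with (fun s => P a s \/ exists b, In b l /\ P b s).
    + intros s [b [[<-|Hb] Hp]]; [left|right; exists b]; auto.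
    + apply nowhere_dense_union; [apply H; left; auto|apply IH; intros; apply H; right; auto].
Qed.

Lemma continuous_eps_delta f x : continuous f x -> forall e, 0 < e ->
  exists d, 0 < d /\ forall y, Rabs (y - x) < d -> Rabs (f y - f x) < e.
Proof.
  intros H e He. destruct (proj1 (filterlim_locally f (f x)) H (mkposreal e He)) as [d Hd].
  exists d; split; [apply cond_pos|]. intros y Hy; apply (Hd y Hy).
Qed.

Lemma nowhere_dense_zeros (f : R -> R) :
  (forall s, continuous f s) -> (forall u v, u < v -> exists s, u < s < v /\ f s <> 0) ->
  nowhere_dense (fun s => f s = 0).
Proof.
  intros Hf Hnz u v Huv. destruct (Hnz u v Huv) as [s [Hs Hfs]].
  exists s; split; auto.
  destruct (continuous_eps_delta f s (Hf s) (Rabs (f s))) as [d [Hd Hn]];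
    [apply Rabs_pos_lt; auto|].
  exists d; split; auto. intros t Ht Hft. specialize (Hn t Ht).
  rewrite Hft, Rminus_0_l, Rabs_Ropp in Hn. lra.
Qed.

Lemma nowhere_dense_point a : nowhere_dense (fun s => s = a).
Proof.
  apply (nowhere_dense_subset _ (fun s => s - a = 0)); [intros; lra|].
  apply nowhere_dense_zeros.
  - intros s; apply (continuous_minus (fun s => s) (fun _ => a));
      [apply continuous_id|apply continuous_const].
  - intros u v Huv. destruct (Req_dec ((u + v) / 2) a) as [Ha|Ha].
    + exists ((u + a) / 2); split; lra.
    + exists ((u + v) / 2); split; lra.
Qed.

Lemma continuous_zero_off_nowhere_dense (B : R -> Prop) (h : R -> R) a b s :
  nowhere_dense B -> a < b -> a <= s <= b -> continuous h s ->
  (forall t, a < t < b -> ~ B t -> h t = 0) -> h s = 0.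
Proof.
  intros HB Hab Hs Hh Hz. apply NNPP; intro Hhs.
  destruct (continuous_eps_delta h s Hh (Rabs (h s))) as [d [Hd Hn]];
    [apply Rabs_pos_lt; auto|].
  set (u := Rmax a (s - d)). set (v := Rmin b (s + d)).
  assert (Hu : a <= u /\ s - d <= u /\ (u = a \/ u = s - d)).
  { unfold u, Rmax; destruct (Rle_dec a (s - d)); lra. }
  assert (Hv : v <= b /\ v <= s + d /\ (v = b \/ v = s + d)).
  { unfold v, Rmin; destruct (Rle_dec b (s + d)); lra. }
  destruct (HB u v) as [t [Ht [d' [Hd' Hn']]]]; [lra|].
  assert (Hbt : ~ B t) by (apply Hn'; rewrite Rminus_eq_0, Rabs_R0; auto).
  assert (Hst : Rabs (t - s) < d) by (apply Rabs_def1; lra).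
  specialize (Hn t Hst). rewrite (Hz t) in Hn; [|lra|auto].
  rewrite Rminus_0_l, Rabs_Ropp in Hn; lra.
Qed.

Lemma periodic_IZR (f : R -> R) L : (forall s, f (s + L) = f s) ->
  forall z s, f (s + IZR z * L) = f s.
Proof.
  intros Hf.
  assert (Hn : forall n s, f (s + INR n * L) = f s).
  { induction n as [|n IH]; intros s; [f_equal; simpl; ring|].
    rewrite S_INR. replace (s + (INR n + 1) * L) with (s + INR n * L + L) by ring.
    rewrite Hf; apply IH. }
  intros [|p|p] s.
  - f_equal; simpl; ring.
  - change (IZR (Z.pos p)) with (IPR p); rewrite <- INR_IPR; apply Hn.
  - change (IZR (Z.neg p)) with (- IPR p); rewrite <- INR_IPR.
    rewrite <- (Hn (Pos.to_nat p)); f_equal; ring.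
Qed.

Lemma Derive_periodic (f : R -> R) L : (forall s, f (s + L) = f s) ->
  (forall s, ex_derive f s) -> forall s, Derive f (s + L) = Derive f s.
Proof.
  intros Hf Hd s.
  assert (Hc : is_derive (fun t => f (t + L)) s (1 * Derive f (s + L))).
  { apply (is_derive_comp f (fun t => t + L)); [apply Derive_correct, Hd|auto_derive; auto]. }
  transitivity (Derive (fun t => f (t + L)) s); [|apply Derive_ext, Hf].
  rewrite <- Rmult_1_l at 1; symmetry; apply is_derive_unique, Hc.
Qed.

Lemma floor_decomposition L s : 0 < L -> exists s' z, 0 <= s' < L /\ s = s' + IZR z * L.
Proof.
  intros HL. exists (s - IZR (Int_part (s / L)) * L), (Int_part (s / L)); split; [|ring].
  destruct (base_fp (s / L)) as [Hge Hlt]; unfold frac_part in *.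
  replace (s - IZR (Int_part (s / L)) * L) with (L * (s / L - IZR (Int_part (s / L))))
    by (field; lra).
  split; [apply Rmult_le_pos|]; nra.
Qed.

Lemma orthogonal_normal_multiple v1 v2 w1 w2 r : 0 <= r ->
  w1 ^ 2 + w2 ^ 2 = 1 -> v1 ^ 2 + v2 ^ 2 = r ^ 2 -> v1 * w1 + v2 * w2 = 0 ->
  exists t, Rabs t = r /\ v1 = - t * w2 /\ v2 = t * w1.
Proof.
  intros Hr Hw Hv Horth. exists (- v1 * w2 + v2 * w1); repeat split.
  - rewrite <- (Rabs_right r) by lra. apply Rsqr_eq_abs_0. rewrite !Rsqr_pow2, <- Hv.
    transitivity ((v1 ^ 2 + v2 ^ 2) * (w1 ^ 2 + w2 ^ 2) - (v1 * w1 + v2 * w2) ^ 2); [ring|].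
    rewrite Hw, Horth; ring.
  - transitivity (v1 * (w1 ^ 2 + w2 ^ 2) - (v1 * w1 + v2 * w2) * w1); [|ring].
    rewrite Hw, Horth; ring.
  - transitivity (v2 * (w1 ^ 2 + w2 ^ 2) - (v1 * w1 + v2 * w2) * w2); [|ring].
    rewrite Hw, Horth; ring.
Qed.

Lemma continuous_of_ex_derive (f : R -> R) x : ex_derive f x -> continuous f x.
Proof. apply (ex_derive_continuous (K := R_AbsRing) (V := R_NormedModule)). Qed.

Section Curve.

Variables (g1 g2 : R -> R) (L r rho : R).
Hypothesis curve : arclength_simple_closed_curve g1 g2 L.
Hypothesis tubular : tubular_radius g1 g2 L rho.
Hypothesis r_pos : 0 < r.
Hypothesis r_lt_rho : r < rho.

Lemma L_pos : 0 < L.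
Proof. apply curve. Qed.

Lemma ex_derive_g1 s : ex_derive g1 s.
Proof. apply (proj1 curve 1%nat). Qed.

Lemma ex_derive_g2 s : ex_derive g2 s.
Proof. apply (proj1 (proj2 curve) 1%nat). Qed.

Lemma continuous_g1 s : continuous g1 s.
Proof. apply continuous_of_ex_derive, ex_derive_g1. Qed.

Lemma continuous_g2 s : continuous g2 s.
Proof. apply continuous_of_ex_derive, ex_derive_g2. Qed.

Lemma normal_map_injective s s' t t' : Rabs (s - s') < L -> Rabs t < rho -> Rabs t' < rho ->
  g1 s - t * Derive g2 s = g1 s' - t' * Derive g2 s' ->
  g2 s + t * Derive g1 s = g2 s' + t' * Derive g1 s' -> s = s'.
Proof.
  intros Hss' Ht Ht' E1 E2.
  destruct curve as [_ [_ [HL [Hper _]]]].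
  assert (P1 : forall s, g1 (s + L) = g1 s) by apply Hper.
  assert (P2 : forall s, g2 (s + L) = g2 s) by apply Hper.
  assert (D1 := Derive_periodic g1 L P1 ex_derive_g1).
  assert (D2 := Derive_periodic g2 L P2 ex_derive_g2).
  destruct (floor_decomposition L s HL) as [a [z [Ha ->]]].
  destruct (floor_decomposition L s' HL) as [b [z' [Hb ->]]].
  rewrite !(periodic_IZR _ _ P1), !(periodic_IZR _ _ P2),
    !(periodic_IZR _ _ D1), !(periodic_IZR _ _ D2) in *.
  destruct (proj2 tubular a t b t' Ha Hb Ht Ht' E1 E2) as [<- _].
  replace (a + IZR z * L - (a + IZR z' * L)) with (IZR (z - z') * L) in Hss'
    by (rewrite minus_IZR; ring).
  rewrite Rabs_mult, (Rabs_right L) in Hss' by lra.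
  assert (Hzz' : (z - z' = 0)%Z).
  { assert (Habs : Rabs (IZR (z - z')) < 1) by (apply (Rmult_lt_reg_r L); lra).
    apply Rabs_def2 in Habs; apply one_IZR_lt1; lra. }
  replace z' with z by lia; reflexivity.
Qed.

Lemma continuous_circ_along_curve p1 p2 s :
  continuous (fun t => circ (g1 t) (g2 t) r p1 p2) s.
Proof.
  apply continuous_of_ex_derive; unfold circ; auto_derive.
  split; [apply ex_derive_g1|split; [apply ex_derive_g2|auto]].
Qed.

(* The derivative of |p - gamma(t)|^2 vanishes at s, so p - gamma(s) is normal
   to the curve. *)
Lemma normal_of_circ_locally_zero p1 p2 s :
  locally s (fun t => circ (g1 t) (g2 t) r p1 p2 = 0) ->
  exists t, Rabs t = r /\ p1 = g1 s - t * Derive g2 s /\ p2 = g2 s + t * Derive g1 s.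
Proof.
  intros Hz.
  assert (Hd : is_derive (fun t => circ (g1 t) (g2 t) r p1 p2) s
    (- 2 * ((p1 - g1 s) * Derive g1 s + (p2 - g2 s) * Derive g2 s))).
  { unfold circ; auto_derive; [split; [apply ex_derive_g1|split; [apply ex_derive_g2|auto]]|].
    change (fun x => g1 x) with g1; change (fun x => g2 x) with g2; ring. }
  assert (Hd0 : is_derive (fun t => circ (g1 t) (g2 t) r p1 p2) s 0).
  { apply (is_derive_ext_loc (fun _ => 0)); [|auto_derive; [auto|ring]].
    eapply filter_imp; [|exact Hz]; intros t Ht; rewrite Ht; reflexivity. }
  apply is_derive_unique in Hd, Hd0; rewrite Hd in Hd0.
  destruct (orthogonal_normal_multiple (p1 - g1 s) (p2 - g2 s) (Derive g1 s) (Derive g2 s) r)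
    as [t [Ht [E1 E2]]]; try lra; [apply curve| |].
  - pose proof (locally_singleton _ _ Hz) as Hs; unfold circ in Hs; lra.
  - exists t; repeat split; lra.
Qed.

Lemma circ_along_curve_no_interval p1 p2 u v : u < v ->
  exists s, u < s < v /\ circ (g1 s) (g2 s) r p1 p2 <> 0.
Proof.
  intros Huv; apply NNPP; intro Hn.
  assert (Hnormal : forall s, u < s < v ->
    exists t, Rabs t = r /\ p1 = g1 s - t * Derive g2 s /\ p2 = g2 s + t * Derive g1 s).
  { intros s Hs; apply normal_of_circ_locally_zero.
    eapply filter_imp; [|apply (open_and _ _ (open_gt u) (open_lt v) s Hs)].
    intros t Ht; apply NNPP; intro Hct; apply Hn; exists t; auto. }
  pose proof L_pos.
  set (w := Rmin (v - u) L).
  assert (Hw : 0 < w /\ w <= v - u /\ w <= L).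
  { repeat split; [apply Rmin_glb_lt|apply Rmin_l|apply Rmin_r]; lra. }
  destruct (Hnormal (u + w / 3)) as [t [Ht [E1 E2]]]; [lra|].
  destruct (Hnormal (u + 2 * w / 3)) as [t' [Ht' [E1' E2']]]; [lra|].
  assert (Heq : u + w / 3 = u + 2 * w / 3).
  { apply (normal_map_injective _ _ t t'); try lra.
    rewrite Rabs_left; lra. }
  lra.
Qed.

Lemma nowhere_dense_circ_through p1 p2 :
  nowhere_dense (fun s => circ (g1 s) (g2 s) r p1 p2 = 0).
Proof.
  apply nowhere_dense_zeros; [apply continuous_circ_along_curve|].
  apply circ_along_curve_no_interval.
Qed.

Definition triple_point (a b s : R) : Prop := exists x y,
  circ (g1 a) (g2 a) r x y = 0 /\ circ (g1 b) (g2 b) r x y = 0 /\ circ (g1 s) (g2 s) r x y = 0.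

(* A new circle through a common point of two circles of l would defeat the
   division by their equations. *)
Definition bad_parameter (l : list R) (s : R) : Prop :=
  In s l \/ exists a b, In a l /\ In b l /\ a <> b /\ triple_point a b s.

Lemma nowhere_dense_triple_point a b :
  0 < (g1 a - g1 b) ^ 2 + (g2 a - g2 b) ^ 2 < 4 * r ^ 2 -> nowhere_dense (triple_point a b).
Proof.
  intros Hab.
  destruct (circles_meet_in_two_points (g1 a) (g2 a) (g1 b) (g2 b) r r_pos Hab)
    as [p1 [p2 [q1 [q2 Hpq]]]].
  apply nowhere_dense_subset with
    (fun s => circ (g1 s) (g2 s) r p1 p2 = 0 \/ circ (g1 s) (g2 s) r q1 q2 = 0).
  - intros s [x [y [Ha [Hb Hs]]]].
    destruct (Hpq x y Ha Hb) as [[-> ->]|[-> ->]]; auto.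
  - apply nowhere_dense_union; apply nowhere_dense_circ_through.
Qed.

Lemma nowhere_dense_bad_parameter l :
  (forall a b, In a l -> In b l -> a <> b ->
     0 < (g1 a - g1 b) ^ 2 + (g2 a - g2 b) ^ 2 < 4 * r ^ 2) ->
  nowhere_dense (bad_parameter l).
Proof.
  intros HS; apply nowhere_dense_union.
  - apply nowhere_dense_subset with (fun s => exists a, In a l /\ s = a);
      [intros s Hs; exists s; auto|].
    apply nowhere_dense_exists_in; intros; apply nowhere_dense_point.
  - apply nowhere_dense_subset with
      (fun s => exists a, In a l /\ exists b, In b l /\ a <> b /\ triple_point a b s).
    { intros s [a [b [Ha [Hb H]]]]; exists a; split; auto; exists b; auto. }
    apply nowhere_dense_exists_in; intros a Ha; apply nowhere_dense_exists_in; intros b Hb.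
    destruct (Req_dec a b) as [<-|Hab].
    + apply nowhere_dense_subset with (fun _ => False); [intros s [Hne _]; exact (Hne eq_refl)|].
      apply nowhere_dense_empty.
    + apply nowhere_dense_subset with (triple_point a b); [intros s [_ H]; auto|].
      apply nowhere_dense_triple_point; auto.
Qed.

Lemma centres_close s0 : exists e0, 0 < e0 /\ forall a b,
  Rabs (a - s0) < e0 -> Rabs (b - s0) < e0 -> a <> b ->
  0 < (g1 a - g1 b) ^ 2 + (g2 a - g2 b) ^ 2 < 4 * r ^ 2.
Proof.
  pose proof L_pos.
  destruct (continuous_eps_delta _ _ (continuous_g1 s0) (r / 2)) as [d1 [Hd1 C1]]; [lra|].
  destruct (continuous_eps_delta _ _ (continuous_g2 s0) (r / 2)) as [d2 [Hd2 C2]]; [lra|].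
  exists (Rmin (Rmin d1 d2) (L / 2)); split.
  { apply Rmin_glb_lt; [apply Rmin_glb_lt|]; lra. }
  intros a b Ha Hb Hab.
  pose proof (Rmin_l (Rmin d1 d2) (L / 2)). pose proof (Rmin_r (Rmin d1 d2) (L / 2)).
  pose proof (Rmin_l d1 d2). pose proof (Rmin_r d1 d2).
  assert (Ha1 := C1 a ltac:(lra)). assert (Ha2 := C2 a ltac:(lra)).
  assert (Hb1 := C1 b ltac:(lra)). assert (Hb2 := C2 b ltac:(lra)).
  apply Rabs_def2 in Ha, Hb, Ha1, Ha2, Hb1, Hb2.
  assert (Hsq : forall z, z <> 0 -> 0 < z ^ 2)
    by (intros; rewrite <- Rsqr_pow2; apply Rsqr_pos_lt; auto).
  split.
  - pose proof (pow2_ge_0 (g1 a - g1 b)). pose proof (pow2_ge_0 (g2 a - g2 b)).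
    destruct (Req_dec (g1 a) (g1 b)) as [E1|N1]; cycle 1.
    { assert (0 < (g1 a - g1 b) ^ 2) by (apply Hsq; intro; apply N1; lra); lra. }
    destruct (Req_dec (g2 a) (g2 b)) as [E2|N2]; cycle 1.
    { assert (0 < (g2 a - g2 b) ^ 2) by (apply Hsq; intro; apply N2; lra); lra. }
    exfalso; apply Hab, (normal_map_injective a b 0 0); rewrite ?Rabs_R0; try lra.
    apply Rabs_def1; lra.
  - assert (Hlt : forall z, - r < z < r -> z ^ 2 < r ^ 2) by (intros; nra).
    pose proof (Hlt (g1 a - g1 b) ltac:(lra)). pose proof (Hlt (g2 a - g2 b) ltac:(lra)).
    pose proof (pow_lt r 2 r_pos). lra.
Qed.

End Curve.

Section Interpolation.

Variables (g1 g2 : R -> R) (r : R) (J : R -> Prop) (N : nat) (F : R -> R -> R).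
Hypothesis r_pos : 0 < r.
Hypothesis J_close : forall a b, J a -> J b -> a <> b ->
  0 < (g1 a - g1 b) ^ 2 + (g2 a - g2 b) ^ 2 < 4 * r ^ 2.
Hypothesis F_poly_on_circles : forall s, J s -> exists Ps, poly2 N Ps /\
  forall x y, circ (g1 s) (g2 s) r x y = 0 -> F x y = Ps x y.
Hypothesis J_good_parameter : forall l, (forall a, In a l -> J a) ->
  exists s, J s /\ ~ bad_parameter g1 g2 r l s.

Definition interpolant (l : list R) (P : R -> R -> R) : Prop :=
  NoDup l /\ (forall a, In a l -> J a) /\ wpoly N P /\
  forall a x y, In a l -> circ (g1 a) (g2 a) r x y = 0 -> F x y = P x y.

(* On the circle of s, F - P agrees with a polynomial of degree N vanishing at the
   points where this circle meets the circles of l, hence divisible there by the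
   product of their equations. *)
Lemma interpolant_correction l P s : interpolant l P -> J s -> ~ bad_parameter g1 g2 r l s ->
  exists Q, poly2 (N - length l) Q /\
    (forall x y, circ (g1 s) (g2 s) r x y = 0 ->
       F x y = P x y + Q x y * circ_prod g1 g2 r l x y) /\
    ((N < length l)%nat -> forall x y, circ (g1 s) (g2 s) r x y = 0 -> F x y = P x y).
Proof.
  intros [Hnd [HJ [HP HFP]]] Hs Hbad.
  destruct (F_poly_on_circles s Hs) as [Ps [HPs EPs]].
  destruct (wpoly_on_circle N P (g1 s) (g2 s) r HP) as [Pc [HPc EPc]].
  assert (EPc' : forall x y, circ (g1 s) (g2 s) r x y = 0 -> P x y = Pc x y)
    by (intros x y Hc; apply EPc; unfold circ in Hc; lra).
  destruct (poly2_div_circ_prod g1 g2 r (g1 s) (g2 s) r_pos l N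
    (fun x y => Ps x y - Pc x y) Hnd) as [Q [HQ [EQ ZQ]]].
  - intros a Ha; apply J_close; auto. intros ->; apply Hbad; left; auto.
  - intros a b Ha Hb Hab x y Hcs Hca Hcb.
    apply Hbad; right; exists a, b; repeat split; auto; exists x, y; auto.
  - apply poly2_sub; auto.
  - intros a x y Ha Hcs Hca. rewrite <- EPs, <- EPc', (HFP a); auto; ring.
  - exists Q; repeat split; auto.
    + intros x y Hc. rewrite EPs, EPc', <- EQ by auto; ring.
    + intros HN x y Hc. rewrite EPs, EPc' by auto.
      assert (Ps x y - Pc x y = 0) by (apply ZQ; auto); lra.
Qed.

Lemma interpolant_extend l P : (length l <= N)%nat -> interpolant l P ->
  exists s P', interpolant (s :: l) P'.
Proof.
  intros Hlen HSP. pose proof HSP as [Hnd [HJ [HP HFP]]].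
  destruct (J_good_parameter l HJ) as [s [Hs Hbad]].
  destruct (interpolant_correction l P s HSP Hs Hbad) as [Q [HQ [EQ _]]].
  exists s, (fun x y => P x y + Q x y * circ_prod g1 g2 r l x y); repeat split.
  - constructor; auto. intro; apply Hbad; left; auto.
  - intros a [<-|Ha]; auto.
  - apply wpoly_add; auto. apply (wpoly_le (N - length l + length l)); [lia|].
    apply wpoly_mul; [apply wpoly_of_poly2; auto|apply wpoly_circ_prod].
  - intros a x y [<-|Ha] Hc; [apply EQ; auto|].
    rewrite (circ_prod_zero g1 g2 r l a x y Ha Hc), (HFP a x y Ha Hc); ring.
Qed.

Lemma interpolant_exists : exists l P, length l = S N /\ interpolant l P.
Proof.
  assert (Hk : forall k, (k <= S N)%nat -> exists l P, length l = k /\ interpolant l P).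
  { induction k as [|k IH]; intros Hk.
    - exists nil, (fun _ _ => 0); repeat split; try constructor; intros a; [intros []|].
      intros x y [].
    - destruct (IH ltac:(lia)) as [l [P [Hlen HSP]]].
      destruct (interpolant_extend l P ltac:(lia) HSP) as [s [P' HP']].
      exists (s :: l), P'; simpl; auto. }
  apply Hk; lia.
Qed.

Lemma interpolant_agrees l P : length l = S N -> interpolant l P ->
  forall s, J s -> ~ bad_parameter g1 g2 r l s ->
  forall x y, circ (g1 s) (g2 s) r x y = 0 -> F x y = P x y.
Proof.
  intros Hlen HSP s Hs Hbad.
  destruct (interpolant_correction l P s HSP Hs Hbad) as [Q [_ [_ Z]]]. apply Z; lia.
Qed.

End Interpolation.

Lemma smooth2_continuous F : smooth2 F -> forall (u v : R -> R) t,
  continuous u t -> continuous v t -> continuous (fun t => F (u t) (v t)) t.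
Proof. intros HF u v t Hu Hv; apply continuous_comp_2; auto; apply (HF nil). Qed.

(* Translating a point of the circle of s by gamma(t) - gamma(s) gives a point
   of the circle of t, and both sides are continuous in t. *)
Lemma agree_on_limit_circle (g1 g2 : R -> R) r (F P : R -> R -> R) d (B : R -> Prop) a b s x y :
  (forall t, continuous g1 t) -> (forall t, continuous g2 t) -> smooth2 F -> poly2 d P ->
  nowhere_dense B -> a < b -> a <= s <= b ->
  (forall t, a < t < b -> ~ B t ->
     forall x y, circ (g1 t) (g2 t) r x y = 0 -> F x y = P x y) ->
  circ (g1 s) (g2 s) r x y = 0 -> F x y = P x y.
Proof.
  intros Hg1 Hg2 HF HP HB Hab Hs Hagree Hc.
  set (u t := g1 t + (x - g1 s)). set (v t := g2 t + (y - g2 s)).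
  assert (Hu : forall t, continuous u t)
    by (intros; apply (continuous_plus g1 (fun _ => x - g1 s)); auto using continuous_const).
  assert (Hv : forall t, continuous v t)
    by (intros; apply (continuous_plus g2 (fun _ => y - g2 s)); auto using continuous_const).
  assert (Hz : F (u s) (v s) - P (u s) (v s) = 0).
  { apply (continuous_zero_off_nowhere_dense B (fun t => F (u t) (v t) - P (u t) (v t))
      a b s HB Hab Hs).
    - apply (continuous_minus (fun t => F (u t) (v t)) (fun t => P (u t) (v t)));
        [apply smooth2_continuous|apply (poly2_continuous d)]; auto.
    - intros t Ht HBt. rewrite (Hagree t Ht HBt); [ring|].
      unfold circ, u, v in *; rewrite <- Hc; ring. }
  unfold u, v in Hz. replace (g1 s + (x - g1 s)) with x in Hz by ring.
  replace (g2 s + (y - g2 s)) with y in Hz by ring. lra.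
Qed.

Lemma nowhere_dense_avoid (B : R -> Prop) a b : nowhere_dense B -> a < b ->
  exists s, a < s < b /\ ~ B s.
Proof.
  intros HB Hab. destruct (HB a b Hab) as [s [Hs [d [Hd Hn]]]].
  exists s; split; auto. apply Hn; rewrite Rminus_eq_0, Rabs_R0; auto.
Qed.

Lemma poly_on_circles_of_interval g1 g2 L r rho s0 eps N F :
  arclength_simple_closed_curve g1 g2 L -> tubular_radius g1 g2 L rho ->
  0 < r -> r < rho -> 0 < eps ->
  (forall a b, Rabs (a - s0) < eps -> Rabs (b - s0) < eps -> a <> b ->
     0 < (g1 a - g1 b) ^ 2 + (g2 a - g2 b) ^ 2 < 4 * r ^ 2) ->
  smooth2 F ->
  (forall s, Rabs (s - s0) < eps -> exists Ps, poly2 N Ps /\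
     forall x y, circ (g1 s) (g2 s) r x y = 0 -> F x y = Ps x y) ->
  exists P, wpoly N P /\ forall s x y, Rabs (s - s0) <= eps ->
    circ (g1 s) (g2 s) r x y = 0 -> F x y = P x y.
Proof.
  intros Hc Ht Hr Hr_rho Heps Hclose HF HFP.
  set (J s := Rabs (s - s0) < eps).
  assert (Hbad : forall l, (forall a, In a l -> J a) -> nowhere_dense (bad_parameter g1 g2 r l))
    by (intros l Hl; apply (nowhere_dense_bad_parameter g1 g2 L r rho); auto;
        intros a b Ha Hb; apply Hclose; apply Hl; auto).
  assert (J_good : forall l, (forall a, In a l -> J a) ->
    exists s, J s /\ ~ bad_parameter g1 g2 r l s).
  { intros l Hl. destruct (nowhere_dense_avoid _ (s0 - eps) (s0 + eps) (Hbad l Hl))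
      as [s [Hs Hn]]; [lra|].
    exists s; split; [apply Rabs_lt_between'; lra|auto]. }
  destruct (interpolant_exists g1 g2 r J N F Hr Hclose HFP J_good) as [l [P [Hlen HlP]]].
  exists P; split; [apply HlP|].
  intros s x y Hs Hxy. apply Rabs_le_between' in Hs.
  apply (agree_on_limit_circle g1 g2 r F P (2 * N) (bad_parameter g1 g2 r l)
    (s0 - eps) (s0 + eps) s); auto; try lra.
  - apply (continuous_g1 g1 g2 L Hc).
  - apply (continuous_g2 g1 g2 L Hc).
  - apply poly2_of_wpoly, HlP.
  - apply Hbad, HlP.
  - intros t Ht' Hbt. apply (interpolant_agrees g1 g2 r J N F Hr Hclose HFP l P Hlen HlP); auto.
    apply Rabs_lt_between'; lra.
Qed.

Lemma on_circle_circ g1 g2 r s x y :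
  on_circle g1 g2 r s x y <-> circ (g1 s) (g2 s) r x y = 0.
Proof. unfold on_circle, circ; lra. Qed.

Theorem lemma6p1 :
  forall (g1 g2 : R -> R) (L r : R),
    arclength_simple_closed_curve g1 g2 L ->
    0 < r ->
    (exists rho, tubular_radius g1 g2 L rho /\ 2 * r < rho) ->
    forall s0 : R,
    exists eps0 : R, 0 < eps0 /\
    forall (eps : R), 0 < eps < eps0 ->
    forall (N : nat) (F : R -> R -> R),
      smooth2 F ->
      (forall s, Rabs (s - s0) < eps ->
         exists Ps, is_poly2 N Ps /\
           forall x1 x2, on_circle g1 g2 r s x1 x2 -> F x1 x2 = Ps x1 x2) ->
      exists P, is_poly2 (2 * N) P /\
        forall x1 x2, in_A g1 g2 r s0 eps x1 x2 -> F x1 x2 = P x1 x2.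
Proof.
  intros g1 g2 L r Hc Hr [rho [Ht Hrho]] s0.
  destruct (centres_close g1 g2 L r rho Hc Ht Hr ltac:(lra) s0) as [e0 [He0 Hclose]].
  exists e0; split; auto. intros eps [Heps Heps0] N F HF HFP.
  destruct (poly_on_circles_of_interval g1 g2 L r rho s0 eps N F) as [P [HP EP]];
    auto; try lra.
  - intros a b Ha Hb; apply Hclose; lra.
  - intros s Hs. destruct (HFP s Hs) as [Ps [HPs EPs]].
    exists Ps; split; [apply poly2_of_is_poly2; auto|].
    intros x y Hxy; apply EPs, on_circle_circ, Hxy.
  - exists P; split; [apply is_poly2_of_poly2, poly2_of_wpoly, HP|].
    intros x1 x2 [s [Hs Hon]]; apply (EP s); [|apply on_circle_circ]; auto.
Qed.
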